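(* Let $Q$ be an admissible orientation of $\tilde A_n$ and $I,J$ indecomposable linearized semigroup ideals of $\Bbbk Q$ of type II such that $\Gamma_I\cup\Gamma_J=\Gamma$. Assume that, for each isolated vertex $\omega$ of $\Gamma_I\cap\Gamma_J$, the edge of $\Gamma_J$ adjacent to $\omega$ is a source of $Q$. Then $IJ$ decomposes into a direct sum of two non-zero ideals.
   Context: $\Bbbk$ is an algebraically closed field. An admissible orientation of $\tilde A_n$ is a finite quiver $Q$ with $n$ vertices whose underlying undirected graph is a cycle, having no oriented cycle and at least one source. Paths include trivial paths $\varepsilon_x$; products are concatenations when defined, $0$ otherwise. Maximal paths are paths not properly contained as subpaths of other paths. A linearized semigroup ideal is an ideal spanned by a set $X$ of paths with $\alpha\omega\beta\in X$ whenever $\omega\in X$ and $\alpha\omega\beta$ is defined. $\Gamma$: vertices the maximal paths, edges the sources and sinks of $Q$, edge $x$ joining the two maximal paths having $x$ as an endpoint. $\Gamma_I$: vertices the maximal paths in $I$, edges the sources/sinks $x$ with $\varepsilon_x\in I$. An indecomposable (non-zero, not a direct sum of two non-zero ideals) linearized semigroup ideal $I$ is of type II if $\Gamma_I$ is a chain (path graph) with at least two vertices which is not all of $\Gamma$. *)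

From HB Require Import structures.
From mathcomp Require Import all_boot all_algebra.
Set Implicit Arguments. Unset Strict Implicit. Unset Printing Implicit Defensive.
Import GRing.Theory.
Local Open Scope ring_scope.

Record quiver := Quiver {
  qV : finType; qE : finType; qsrc : qE -> qV; qtgt : qE -> qV }.

Section Quiver.
Variable Q : quiver.
Local Notation V := (qV Q).
Local Notation E := (qE Q).
Local Notation src := (@qsrc Q).
Local Notation tgt := (@qtgt Q).

(* A (possibly non-valid) path: starting vertex and list of arrows,
   arrows listed in the order they are traversed. *)
Definition qpath := (V * seq E)%type.

Definition pend (p : qpath) : V := last p.1 (map tgt p.2).

Definition valid (p : qpath) : bool :=
  match p.2 with
  | [::] => true
  | e :: s => (src e == p.1) && path (fun a b => tgt a == src b) e s
  end.

Definition triv (x : V) : qpath := (x, [::]).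

(* p is a subpath of q: q = alpha p beta for some paths alpha, beta *)
Definition subpath (p q : qpath) : Prop :=
  exists i j, (i <= j <= size q.2)%N /\
    p = (pend (q.1, take i q.2), take (j - i) (drop i q.2)).

Definition maximal_path (p : qpath) : Prop :=
  valid p /\ forall q, valid q -> subpath p q -> q = p.

Definition is_source (x : V) : Prop := forall e, tgt e != x.
Definition is_sink (x : V) : Prop := forall e, src e != x.
Definition source_or_sink (x : V) : Prop := is_source x \/ is_sink x.

Definition no_oriented_cycle : Prop :=
  forall p, valid p -> (0 < size p.2)%N -> pend p != p.1.

(* The underlying undirected graph of Q is a cycle with n vertices
   (n = 1: a loop, n = 2: two parallel edges). *)
Definition underlying_cycle (n : nat) : Prop :=
  #|V| = n /\
  exists (f : 'I_n -> V) (g : 'I_n -> E), bijective f /\ bijective g /\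
    forall i, ((src (g i) == f i) && (tgt (g i) == f (ordS i))) ||
              ((src (g i) == f (ordS i)) && (tgt (g i) == f i)).

Definition admissible_At (n : nat) : Prop :=
  underlying_cycle n /\ no_oriented_cycle /\ exists x, is_source x.

Variable K : fieldType.

(* Elements of kQ: finitely supported K-valued functions on valid paths
   (coordinates in the basis of paths). *)
Definition elt (f : qpath -> K) : Prop :=
  (forall p, ~~ valid p -> f p = 0) /\
  exists l : seq qpath, forall p, p \notin l -> f p = 0.

Definition delta (p : qpath) : qpath -> K := fun q => if q == p then 1 else 0.

(* Multiplication: on basis elements, delta a * delta b = delta (b then a)
   when the end of b is the start of a, and 0 otherwise
   (composition convention: alpha beta = "first beta, then alpha"). *)
Definition kQmul (f g : qpath -> K) : qpath -> K := fun p =>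
  \sum_(i < (size p.2).+1)
     f (pend (p.1, take i p.2), drop i p.2) * g (p.1, take i p.2).

Definition ideal (I : (qpath -> K) -> Prop) : Prop :=
  [/\ forall f, I f -> elt f,
      I (fun _ => 0),
      forall f g, I f -> I g -> I (fun p => f p + g p),
      forall c f, I f -> I (fun p => c * f p) &
      forall a f, elt a -> I f -> I (kQmul a f) /\ I (kQmul f a)].

Definition nonzero_ideal (I : (qpath -> K) -> Prop) : Prop :=
  exists f, I f /\ exists p, f p != 0.

Definition decomposes (I : (qpath -> K) -> Prop) : Prop :=
  exists I1 I2 : (qpath -> K) -> Prop,
    [/\ ideal I1 /\ ideal I2, nonzero_ideal I1, nonzero_ideal I2,
        (forall f, I1 f -> I2 f -> forall p, f p = 0) &
        forall f, I f <-> exists f1 f2, [/\ I1 f1, I2 f2 &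
                                         forall p, f p = f1 p + f2 p]].

Definition indecomposable (I : (qpath -> K) -> Prop) : Prop :=
  ideal I /\ nonzero_ideal I /\ ~ decomposes I.

Definition lin_semigroup_ideal (I : (qpath -> K) -> Prop) : Prop :=
  exists X : qpath -> bool,
    [/\ forall p, X p -> valid p,
        forall w q, X w -> valid q -> subpath w q -> X q &
        forall f, I f <-> elt f /\ forall p, f p != 0 -> X p].

Definition prod_ideal (I J : (qpath -> K) -> Prop) : (qpath -> K) -> Prop :=
  fun f => exists l : seq ((qpath -> K) * (qpath -> K)),
    foldr (fun u P => [/\ I u.1, J u.2 & P]) True l /\
    forall p, f p = \sum_(u <- l) kQmul u.1 u.2 p.

(* The graph Gamma: vertices = maximal paths, edges = sources and sinks;
   edge x joins the two maximal paths having x as an endpoint. *)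
Definition endpoint (x : V) (p : qpath) : Prop := p.1 = x \/ pend p = x.

Definition joins (x : V) (w1 w2 : qpath) : Prop :=
  [/\ w1 <> w2, endpoint x w1 & endpoint x w2].

Definition GI_vertex (I : (qpath -> K) -> Prop) (p : qpath) : Prop :=
  maximal_path p /\ I (delta p).
Definition GI_edge (I : (qpath -> K) -> Prop) (x : V) : Prop :=
  source_or_sink x /\ I (delta (triv x)).

Definition is_chain_ge2 (Vs : qpath -> Prop) (Es : V -> Prop) : Prop :=
  exists (w : seq qpath) (xs : seq V),
    [/\ (2 <= size w)%N /\ size xs = (size w).-1, uniq w /\ uniq xs,
        (forall p, Vs p <-> p \in w),
        (forall x, Es x <-> x \in xs) &
        forall i (d : qpath) (dx : V), (i < size xs)%N ->
          joins (nth dx xs i) (nth d w i) (nth d w i.+1)].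

Definition GI_is_Gamma (I : (qpath -> K) -> Prop) : Prop :=
  (forall p, GI_vertex I p <-> maximal_path p) /\
  (forall x, GI_edge I x <-> source_or_sink x).

Definition typeII (I : (qpath -> K) -> Prop) : Prop :=
  is_chain_ge2 (GI_vertex I) (GI_edge I) /\ ~ GI_is_Gamma I.

End Quiver.

From mathcomp Require Import all_boot all_algebra.
From mathcomp Require Import zify.
From Stdlib Require Import Classical ClassicalEpsilon.
Set Implicit Arguments. Unset Strict Implicit. Unset Printing Implicit Defensive.
Import GRing.Theory.

(* IJ is spanned by the paths with a prefix in J and a suffix in I, and each of them lies
   on the maximal path of Gamma_I through its suffix. As Gamma_I and Gamma_J cover Gamma but
   Gamma_J is not all of Gamma, some edge x_j of the chain Gamma_I is missing from Gamma_J;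
   sort the spanning paths by the side of x_j on which their maximal path lies. Two distinct
   maximal paths of an acyclic orientation of a cycle share only trivial paths at common
   endpoints, and a trivial path of IJ is a common edge of Gamma_I and Gamma_J, which between
   vertices on both sides of x_j could only be x_j: the two halves span complementary ideals.
   Both are non-zero: an end vertex of the chain has an endpoint in Gamma_J, and either some
   endpoint is a common edge, whose trivial path lies in IJ, or the vertex is isolated in
   Gamma_I cap Gamma_J, so by hypothesis it starts at its Gamma_J-edge and the whole maximal
   path lies in IJ. *)

Lemma drop_cat_le (T : Type) (i : nat) (s1 s2 : seq T) :
  i <= size s1 -> drop i (s1 ++ s2) = drop i s1 ++ s2.
Proof.
by rewrite drop_cat leq_eqVlt => /orP [/eqP ->|->] //; rewrite ltnn subnn drop0 drop_size.
Qed.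

Lemma sum_eq_if_uniq (R : nmodType) (T : eqType) (F : T -> R) (s : seq T) (x : T) :
  uniq s -> (\sum_(y <- s) (if x == y then F y else 0) = if x \in s then F x else 0)%R.
Proof.
elim: s => [|y s IH] /=; first by rewrite big_nil.
case/andP=> y_notin s_uniq; rewrite big_cons IH // inE.
by have [->|] := eqVneq x y; rewrite ?(negbTE y_notin) ?addr0 ?add0r.
Qed.

Section Quiver.
Variable Q : quiver.
Local Notation V := (qV Q).
Local Notation E := (qE Q).
Local Notation src := (@qsrc Q).
Local Notation tgt := (@qtgt Q).
Local Notation P := (qpath Q).
Local Notation valid := (@valid Q).
Local Notation pend := (@pend Q).

Definition path_take (i : nat) (p : P) : P := (p.1, take i p.2).
Definition path_drop (i : nat) (p : P) : P := (pend (path_take i p), drop i p.2).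

Lemma valid_cons (v : V) (e : E) s : valid (v, e :: s) = (src e == v) && valid (tgt e, s).
Proof. by rewrite /valid /=; congr (_ && _); case: s => //= e' s; rewrite eq_sym. Qed.

Lemma pend_nil (v : V) : pend (v, [::]) = v.
Proof. by []. Qed.

Lemma pend_cons (v : V) (e : E) s : pend (v, e :: s) = pend (tgt e, s).
Proof. by []. Qed.

Lemma pend_cat (v : V) a b : pend (v, a ++ b) = pend (pend (v, a), b).
Proof. by rewrite /pend /= map_cat last_cat. Qed.

Lemma pend_rcons (v : V) a (e : E) : pend (v, rcons a e) = tgt e.
Proof. by rewrite /pend /= map_rcons last_rcons. Qed.

Lemma valid_cat (v : V) a b : valid (v, a ++ b) = valid (v, a) && valid (pend (v, a), b).
Proof. by elim: a v => [|e a IH] v //=; rewrite !valid_cons IH andbA. Qed.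

Lemma valid_rcons (v : V) s (e : E) :
  valid (v, rcons s e) = valid (v, s) && (src e == pend (v, s)).
Proof. by rewrite -cats1 valid_cat valid_cons andbT. Qed.

Lemma valid_split i (p : P) : valid (path_take i p) -> valid (path_drop i p) -> valid p.
Proof. by case: p => v s /= v_take v_drop; rewrite -(cat_take_drop i s) valid_cat v_take. Qed.

Lemma subpathP (p q : P) :
  subpath p q <-> exists a b, q.2 = a ++ p.2 ++ b /\ p.1 = pend (q.1, a).
Proof.
split=> [[i [j [/andP [le_ij le_j] ->]]]|].
  exists (take i q.2), (drop j q.2); split=> //=.
  by rewrite -{1}(cat_take_drop i q.2) -{1}(cat_take_drop (j - i) (drop i q.2))
             drop_drop subnK.
case: p q => v s [u t] [a [b []]] /= -> ->.
exists (size a), (size a + size s); rewrite leq_addr !size_cat leq_add2l leq_addr.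
by rewrite drop_size_cat // addKn take_size_cat //= take_size_cat.
Qed.

Lemma subpath_refl (p : P) : subpath p p.
Proof. by apply/subpathP; exists [::], [::]; rewrite cats0; case: p. Qed.

Lemma subpath_trans (p q r : P) : subpath p q -> subpath q r -> subpath p r.
Proof.
case: p q r => v s [u t] [y z].
move=> /subpathP [a [b []]] /= -> -> /subpathP [a' [b' []]] /= -> ->.
by apply/subpathP; exists (a' ++ a), (b ++ b'); rewrite pend_cat !catA.
Qed.

Lemma valid_subpath (p q : P) : subpath p q -> valid q -> valid p.
Proof.
case: p q => v s [u t] /subpathP [a [b []]] /= -> ->.
by rewrite !valid_cat => /and3P [].
Qed.

Lemma path_take_subpath i (p : P) : subpath (path_take i p) p.
Proof. by apply/subpathP; exists [::], (drop i p.2); rewrite cat_take_drop. Qed.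

Lemma path_drop_subpath i (p : P) : subpath (path_drop i p) p.
Proof. by apply/subpathP; exists (take i p.2), [::]; rewrite cats0 cat_take_drop. Qed.

Lemma endpoint_subpath (x : V) (p : P) : endpoint x p -> subpath (x, [::]) p.
Proof.
case: p => v s [<-|<-]; apply/subpathP.
- by exists [::], s.
- by exists s, [::]; rewrite !cats0.
Qed.

Lemma subpath_mem (p q : P) (e : E) : subpath p q -> e \in p.2 -> e \in q.2.
Proof. by move=> /subpathP [a [b [-> _]]] e_in; rewrite !mem_cat e_in orbT. Qed.

Lemma subpath_size_eq (p q : P) : subpath p q -> size q.2 <= size p.2 -> q = p.
Proof.
case: p q => v s [u t] /subpathP [a [b []]] /= -> ->.
rewrite !size_cat => le_size.
have [/size0nil -> /size0nil ->] : size a = 0 /\ size b = 0 by lia.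
by rewrite cats0.
Qed.

Lemma maximal_path_source (M : P) : maximal_path M -> is_source M.1.
Proof.
case: M => v s [vM maxM] e /=; apply/eqP => tgt_e.
have /maxM extend : valid (src e, e :: s) by rewrite valid_cons eqxx tgt_e.
have /extend /(congr1 (size \o snd)) /= : subpath (v, s) (src e, e :: s).
  by apply/subpathP; exists [:: e], [::]; rewrite cats0 /pend /= tgt_e.
lia.
Qed.

Lemma maximal_path_sink (M : P) : maximal_path M -> is_sink (pend M).
Proof.
case: M => v s [vM maxM] e /=; apply/eqP => src_e.
have /maxM extend : valid (v, rcons s e) by rewrite valid_rcons vM src_e eqxx.
have /extend /(congr1 (size \o snd)) /= : subpath (v, s) (v, rcons s e).
  by apply/subpathP; exists [::], [:: e]; rewrite cats1.
by rewrite size_rcons; lia.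
Qed.

Lemma maximal_path_endpoint (x : V) (M : P) :
  maximal_path M -> endpoint x M -> source_or_sink x.
Proof.
by move=> maxM [<-|<-]; [left; apply: maximal_path_source | right; apply: maximal_path_sink].
Qed.

Section PathAlgebra.
Variable K : fieldType.
Local Notation F := (P -> K).
Local Open Scope ring_scope.

Lemma elt0 : elt (fun _ : P => 0 : K).
Proof. by split=> //; exists [::]. Qed.

Lemma eltD (f g : F) : elt f -> elt g -> elt (fun p => f p + g p).
Proof.
move=> [f_valid [lf f_supp]] [g_valid [lg g_supp]]; split=> [p vp|].
  by rewrite f_valid ?g_valid ?addr0.
exists (lf ++ lg) => p; rewrite mem_cat negb_or => /andP [/f_supp -> /g_supp ->].
by rewrite addr0.
Qed.

Lemma eltZ (c : K) (f : F) : elt f -> elt (fun p => c * f p).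
Proof.
move=> [f_valid [l f_supp]]; split=> [p /f_valid ->|]; first by rewrite mulr0.
by exists l => p /f_supp ->; rewrite mulr0.
Qed.

Lemma eq_elt (f g : F) : f =1 g -> elt f -> elt g.
Proof.
move=> fg [f_valid [l f_supp]]; split=> [p /f_valid|]; first by rewrite fg.
by exists l => p /f_supp; rewrite fg.
Qed.

Lemma elt_valid (f : F) (p : P) : elt f -> f p != 0 -> valid p.
Proof. by move=> [f_valid _]; apply: contraNT => /f_valid ->. Qed.

Lemma kQmul_neq0 (a b : F) (p : P) : kQmul a b p != 0 ->
  exists i : 'I_(size p.2).+1, a (path_drop i p) != 0 /\ b (path_take i p) != 0.
Proof.
move=> ab_p; suff /existsP [i /andP []] :
    [exists i : 'I_(size p.2).+1, (a (path_drop i p) != 0) && (b (path_take i p) != 0)].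
  by exists i.
apply: contraNT ab_p; rewrite negb_exists => /forallP none; rewrite /kQmul big1 // => i _.
by have := none i; rewrite negb_and !negbK => /orP [] /eqP ->; rewrite ?mul0r ?mulr0.
Qed.

Lemma eltM (a b : F) : elt a -> elt b -> elt (kQmul a b).
Proof.
move=> ea eb; split=> [p|].
  apply: contraNeq => /kQmul_neq0 [i [a_i b_i]].
  exact: valid_split (elt_valid eb b_i) (elt_valid ea a_i).
have [_ [la a_supp]] := ea; have [_ [lb b_supp]] := eb.
exists [seq (y.1, y.2 ++ x.2) | x <- la, y <- lb] => p.
apply: contraNeq => /kQmul_neq0 [i [a_i b_i]].
have in_la : path_drop i p \in la by apply: contraNT a_i => /a_supp ->.
have in_lb : path_take i p \in lb by apply: contraNT b_i => /b_supp ->.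
have := allpairs_f (fun x y : P => (y.1, y.2 ++ x.2)) in_la in_lb.
by rewrite /= cat_take_drop; case: (p).
Qed.

Definition path_span (Z : P -> Prop) (f : F) : Prop :=
  elt f /\ forall p, f p != 0 -> Z p.

Definition superpath_closed (Z : P -> Prop) : Prop :=
  (forall p, Z p -> valid p) /\ (forall p q, Z p -> valid q -> subpath p q -> Z q).

Lemma path_span_ideal (Z : P -> Prop) : superpath_closed Z -> ideal (path_span Z).
Proof.
move=> [_ Z_up]; split.
- by move=> f [].
- by split=> [|p]; [exact: elt0 | rewrite eqxx].
- move=> f g [ef f_supp] [eg g_supp]; split=> [|p]; first exact: eltD.
  by have [->|/f_supp //] := eqVneq (f p) 0; rewrite add0r => /g_supp.
- move=> c f [ef f_supp]; split=> [|p]; first exact: eltZ.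
  by rewrite mulf_eq0 negb_or => /andP [_ /f_supp].
move=> a f ea [ef f_supp]; split; split=> [|p ab_p]; try exact: eltM.
- have [i [_ /f_supp Z_i]] := kQmul_neq0 ab_p.
  exact: Z_up Z_i (elt_valid (eltM ea ef) ab_p) (path_take_subpath _ _).
- have [i [/f_supp Z_i _]] := kQmul_neq0 ab_p.
  exact: Z_up Z_i (elt_valid (eltM ef ea) ab_p) (path_drop_subpath _ _).
Qed.

Lemma delta_neq0 (p : P) : delta K p p != 0.
Proof. by rewrite /delta eqxx oner_neq0. Qed.

Lemma delta_supp (p q : P) : delta K p q != 0 -> q = p.
Proof. by rewrite /delta; case: (q =P p) => // _; rewrite eqxx. Qed.

Lemma delta_elt (p : P) : valid p -> elt (delta K p).
Proof.
move=> vp; split=> [q|]; first by apply: contraNeq => /delta_supp ->.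
by exists [:: p] => q; rewrite inE; apply: contraNeq => /delta_supp ->.
Qed.

Lemma path_span_delta (Z : P -> Prop) (p : P) :
  (Z p -> valid p) -> path_span Z (delta K p) <-> Z p.
Proof.
move=> Z_valid; split=> [[_ /(_ p (delta_neq0 p))] //|Zp].
by split=> [|q /delta_supp ->]; [exact: delta_elt (Z_valid Zp)|].
Qed.

Lemma path_span_nonzero (Z : P -> Prop) (p : P) :
  valid p -> Z p -> nonzero_ideal (path_span Z).
Proof.
move=> vp Zp; exists (delta K p); split; last by exists p; apply: delta_neq0.
by apply/(path_span_delta (fun=> vp)).
Qed.

Definition restrict (Z : P -> Prop) (f : F) : F :=
  fun p => match excluded_middle_informative (Z p) with left _ => f p | right _ => 0 end.

Lemma path_span_sub (Z Z' : P -> Prop) (f : F) :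
  (forall p, Z p -> Z' p) -> path_span Z f -> path_span Z' f.
Proof. by move=> ZZ' [ef f_supp]; split=> // p /f_supp /ZZ'. Qed.

Lemma eq_path_span (Z : P -> Prop) (f g : F) : f =1 g -> path_span Z f -> path_span Z g.
Proof.
by move=> fg [ef f_supp]; split=> [|p]; [exact: eq_elt ef | rewrite -fg; apply: f_supp].
Qed.

Lemma path_span_restrict (Z Z' : P -> Prop) (f : F) :
  path_span Z f -> path_span (fun p => Z p /\ Z' p) (restrict Z' f).
Proof.
move=> [[f_valid [l f_supp]] f_Z]; rewrite /restrict; split; first split.
- by move=> p /f_valid; case: (excluded_middle_informative (Z' p)).
- by exists l => p /f_supp; case: (excluded_middle_informative (Z' p)).
- move=> p /=; case: excluded_middle_informative => [Z'p|_]; last by rewrite eqxx.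
  by move=> /f_Z.
Qed.

Lemma restrict_split (Z : P -> Prop) (f : F) (p : P) :
  f p = restrict Z f p + restrict (fun q => ~ Z q) f p.
Proof.
rewrite /restrict.
by case: (excluded_middle_informative (Z p)); case: excluded_middle_informative;
  rewrite ?addr0 ?add0r.
Qed.

Lemma path_span_decomposes (Z Z1 Z2 : P -> Prop) :
  superpath_closed Z1 -> superpath_closed Z2 -> (forall p, Z1 p -> Z2 p -> False) ->
  (forall p, Z p <-> Z1 p \/ Z2 p) -> (exists p, Z1 p) -> (exists p, Z2 p) ->
  decomposes (path_span Z).
Proof.
move=> closed1 closed2 disj Z_eq [p1 Z1p1] [p2 Z2p2].
exists (path_span Z1), (path_span Z2); split.
- by split; apply: path_span_ideal.
- exact: path_span_nonzero (proj1 closed1 _ Z1p1) Z1p1.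
- exact: path_span_nonzero (proj1 closed2 _ Z2p2) Z2p2.
- move=> f [_ f_Z1] [_ f_Z2] p; apply/eqP; apply: contraT => f_p.
  by case: (disj p (f_Z1 p f_p) (f_Z2 p f_p)).
move=> f; split=> [f_Z|[f1 [f2 [[e1 f1_Z1] [e2 f2_Z2] f_eq]]]].
  exists (restrict Z1 f), (restrict (fun p => ~ Z1 p) f); split.
  - by apply: path_span_sub (path_span_restrict Z1 f_Z) => p [].
  - by apply: path_span_sub (path_span_restrict _ f_Z) => p [/Z_eq []].
  - exact: restrict_split.
split=> [|p]; first exact: eq_elt (fun p => esym (f_eq p)) (eltD e1 e2).
rewrite f_eq => sum_p; apply/Z_eq.
have [f1_0|/f1_Z1] := eqVneq (f1 p) 0; last by left.
by right; apply: f2_Z2; rewrite f1_0 add0r in sum_p.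
Qed.

Lemma decomposes_iff (A B : F -> Prop) :
  (forall f, A f <-> B f) -> decomposes B -> decomposes A.
Proof. by move=> AB [I1 [I2 [? ? ? ? B_eq]]]; exists I1, I2; split=> // f; rewrite AB. Qed.

Section Product.
Variables (X Y : P -> bool) (I J : F -> Prop).
Hypotheses (closedX : superpath_closed X) (closedY : superpath_closed Y).
Hypotheses (IX : forall f, I f <-> path_span X f) (JY : forall f, J f <-> path_span Y f).

(* kQmul a b reads a on the tail and b on the head of a path, so the paths spanning IJ
   have a head in Y (from J) and a tail in X (from I). *)
Definition prod_paths (p : P) : Prop :=
  valid p /\ exists2 i, (i <= size p.2)%N & Y (path_take i p) && X (path_drop i p).

Lemma prod_paths_closed : superpath_closed prod_paths.
Proof.
split=> [p [] //|w q [vw [i le_i /andP [Yw Xw]]] vq wq]; split=> //.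
have /subpathP [a [b [q_eq w_eq]]] := wq.
exists (size a + i); first by rewrite q_eq !size_cat; lia.
have take_eq : path_take (size a + i) q = (q.1, a ++ take i w.2).
  by rewrite /path_take q_eq takeD take_size_cat // drop_size_cat // takel_cat.
have drop_eq : path_drop (size a + i) q = (pend (path_take i w), drop i w.2 ++ b).
  rewrite /path_drop take_eq pend_cat -w_eq q_eq addnC -drop_drop drop_size_cat //.
  by rewrite drop_cat_le.
apply/andP; split.
- apply: (proj2 closedY) Yw (valid_subpath (path_take_subpath _ _) vq) _.
  by rewrite take_eq; apply/subpathP; exists a, [::]; rewrite cats0 /= w_eq.
- apply: (proj2 closedX) Xw (valid_subpath (path_drop_subpath _ _) vq) _.
  by rewrite drop_eq; apply/subpathP; exists [::], b.
Qed.

Lemma kQmul_prod_paths (a b : F) : I a -> J b -> path_span prod_paths (kQmul a b).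
Proof.
move=> /IX [ea a_X] /JY [eb b_Y]; split=> [|p ab_p]; first exact: eltM.
have [i [/a_X Xi /b_Y Yi]] := kQmul_neq0 ab_p.
split; first exact: elt_valid (eltM ea eb) ab_p.
by exists i; [rewrite -ltnS | rewrite Yi Xi].
Qed.

Lemma kQmul_delta (c : K) (b s q : P) : s.1 = pend b ->
  kQmul (fun r => c * delta K s r) (delta K b) q =
    if q == (b.1, b.2 ++ s.2) then c else 0.
Proof.
case: s => u t /= u_end; rewrite /kQmul; case: eqP => [->|q_neq].
  have lt_b : (size b.2 < (size (b.2 ++ t)).+1)%N by rewrite size_cat ltnS leq_addr.
  rewrite (bigD1 (Ordinal lt_b)) //= big1 ?addr0.
    rewrite take_size_cat // drop_size_cat // -surjective_pairing -u_end.
    by rewrite /delta !eqxx !mulr1.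
  move=> i /eqP i_neq; rewrite /delta; case: eqP => _; last by rewrite mulr0 mul0r.
  case: eqP => [/(congr1 (size \o snd)) /=|]; last by rewrite mulr0.
  rewrite size_takel => [i_size|]; last by rewrite -ltnS.
  by case: i_neq; apply: val_inj.
rewrite big1 // => i _; rewrite /delta.
case: eqP => [[_ t_eq]|_]; last by rewrite mulr0 mul0r.
case: eqP => [b_eq|_]; last by rewrite mulr0.
by case: q_neq; rewrite -b_eq -t_eq /= cat_take_drop; case: (q).
Qed.

Definition split_index (p : P) : nat :=
  find (fun i => Y (path_take i p) && X (path_drop i p)) (iota 0 (size p.2).+1).

Lemma split_indexP (p : P) :
  prod_paths p -> Y (path_take (split_index p) p) && X (path_drop (split_index p) p).
Proof.
case=> _ [i le_i XYi].
have has_i : has (fun i => Y (path_take i p) && X (path_drop i p)) (iota 0 (size p.2).+1).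
  by apply/hasP; exists i; rewrite // mem_iota.
have lt_find : (split_index p < (size p.2).+1)%N by move: has_i; rewrite has_find size_iota.
by have := nth_find 0 has_i; rewrite nth_iota.
Qed.

Lemma prod_ideal_span (f : F) : prod_ideal I J f <-> path_span prod_paths f.
Proof.
have [_ span0 spanD _ _] := path_span_ideal prod_paths_closed.
split=> [[l [IJl f_eq]]|[ef f_supp]].
  apply: eq_path_span (fun p => esym (f_eq p)) _; clear f_eq.
  elim: l IJl => [_|u l IH [Iu Ju /IH]].
    by apply: eq_path_span span0 => p; rewrite big_nil.
  move/(spanD _ _ (kQmul_prod_paths Iu Ju)).
  by apply: eq_path_span => p; rewrite big_cons.
have [_ [L L_supp]] := ef.
pose S := undup [seq p <- L | f p != 0].
have S_supp p : p \in S -> f p != 0 by rewrite mem_undup mem_filter => /andP [].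
exists [seq ((fun r => f p * delta K (path_drop (split_index p) p) r),
             delta K (path_take (split_index p) p)) | p <- S]; split.
  have [_ _ _ spanZ _] := path_span_ideal closedX.
  elim: S S_supp => [//|p S IH] S_supp /=.
  have /andP [Yp Xp] := split_indexP (f_supp p (S_supp p (mem_head _ _))).
  split; last by apply: IH => q q_in; apply: S_supp; rewrite inE q_in orbT.
  - by apply/IX; apply: spanZ; apply/(path_span_delta (proj1 closedX _)).
  - by apply/JY; apply/(path_span_delta (proj1 closedY _)).
move=> q; rewrite big_map.
under eq_bigr => p _ do rewrite kQmul_delta //= cat_take_drop -surjective_pairing.
rewrite sum_eq_if_uniq ?undup_uniq //; case: ifP => // q_notin.
apply/eqP; apply: contraFT q_notin => f_q.
rewrite mem_undup mem_filter f_q /=.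
by apply: contraNT f_q => /L_supp ->; rewrite eqxx.
Qed.

End Product.

Section SpannedIdealGraph.
Variables (I : F -> Prop) (X : P -> bool).
Hypothesis X_valid : forall p, X p -> valid p.
Hypothesis IX : forall f, I f <-> path_span X f.

Lemma delta_spanE (p : P) : I (delta K p) <-> X p.
Proof. by rewrite IX; apply: path_span_delta (X_valid (p := p)). Qed.

Lemma GI_vertexE (p : P) : GI_vertex I p <-> maximal_path p /\ X p.
Proof. by rewrite /GI_vertex delta_spanE. Qed.

Lemma GI_edgeE (x : V) : GI_edge I x <-> source_or_sink x /\ X (x, [::]).
Proof. by rewrite /GI_edge delta_spanE. Qed.

End SpannedIdealGraph.

End PathAlgebra.

Section Acyclic.
Hypothesis acyclic : no_oriented_cycle Q.

Lemma src_neq_tgt (e : E) : src e != tgt e.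
Proof.
have := @acyclic (src e, [:: e]); rewrite valid_cons eqxx => /(_ isT isT).
by rewrite pend_cons pend_nil eq_sym.
Qed.

Lemma valid_uniq (v : V) s : valid (v, s) -> uniq s.
Proof.
elim: s v => [|e s IH] v //=; rewrite valid_cons => /andP [_ vs].
rewrite (IH _ vs) andbT; apply/negP => e_in; move: vs.
case/splitPr: e_in => a b; rewrite valid_cat valid_cons => /and3P [va /eqP back _].
have := @acyclic (src e, e :: a); rewrite valid_cons eqxx va => /(_ isT isT).
by rewrite pend_cons -back eqxx.
Qed.

Lemma valid_size (p : P) : valid p -> size p.2 <= #|E|.
Proof. by case: p => v s /valid_uniq /card_uniqP <-; apply: max_card. Qed.

Lemma maximal_superpath (p : P) : valid p -> exists2 M, maximal_path M & subpath p M.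
Proof.
have [m] := ubnP (#|E| - size p.2); elim: m p => // m IH p lt_m vp.
have [maxp|not_maxp] := classic (maximal_path p); first by exists p; last exact: subpath_refl.
have [q [vq pq qp]] : exists q, [/\ valid q, subpath p q & q <> p].
  apply: NNPP => none; apply: not_maxp; split=> // q vq pq.
  by apply: NNPP => qp; apply: none; exists q.
have lt_pq : size p.2 < size q.2.
  by rewrite ltnNge; apply/negP => /(subpath_size_eq pq).
have lt_q : #|E| - size q.2 < m by have := valid_size vq; lia.
have [M maxM qM] := IH q lt_q vq.
by exists M => //; apply: subpath_trans pq qM.
Qed.

Section Cycle.
Variable n : nat.
Hypothesis cycle : underlying_cycle Q n.

Definition incident (u : V) (e : E) := (src e == u) || (tgt e == u).

Lemma exists_incident (u : V) : exists e, incident u e.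
Proof.
have [_ [f [g [[f' _ f'K] [_ fg]]]]] := cycle.
exists (g (f' u)); have := fg (f' u); rewrite f'K /incident.
by case/orP => /andP [/eqP -> /eqP ->]; rewrite eqxx ?orbT.
Qed.

(* With f and g enumerating the vertices and arrows of the cycle, the arrows at f k
   are g k and g (ord_pred k). *)
Lemma incident_at_most_two (u : V) (e1 e2 e3 : E) :
  incident u e1 -> incident u e2 -> incident u e3 ->
  [\/ e1 = e2, e1 = e3 | e2 = e3].
Proof.
have [_ [f [g [[f' fK _] [[g' _ g'K] fg]]]]] := cycle.
have index e : incident u e -> g' e = f' u \/ g' e = ord_pred (f' u).
  rewrite /incident; have := fg (g' e); rewrite g'K.
  by case/orP => /andP [/eqP -> /eqP ->] /orP [] /eqP <-; rewrite fK ?ordSK; auto.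
move=> /index [] h1 /index [] h2 /index [] h3;
  first [ apply: Or31; apply: (can_inj g'K); congruence
        | apply: Or32; apply: (can_inj g'K); congruence
        | apply: Or33; apply: (can_inj g'K); congruence ].
Qed.

Lemma out_arrow_unique (c e1 e2 : E) : tgt c = src e1 -> src e1 = src e2 -> e1 = e2.
Proof.
move=> c_e1 e1_e2; have /eqP := src_neq_tgt e1; have /eqP := src_neq_tgt e2.
have := @incident_at_most_two (src e1) c e1 e2.
rewrite /incident c_e1 -e1_e2 !eqxx ?orbT => /(_ isT isT isT) [ce1|ce2|e12]; congruence.
Qed.

Lemma in_arrow_unique (c e1 e2 : E) : src c = tgt e1 -> tgt e1 = tgt e2 -> e1 = e2.
Proof.
move=> c_e1 e1_e2; have /eqP := src_neq_tgt e1; have /eqP := src_neq_tgt e2.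
have := @incident_at_most_two (tgt e1) c e1 e2.
rewrite /incident c_e1 -e1_e2 !eqxx ?orbT => /(_ isT isT isT) [ce1|ce2|e12]; congruence.
Qed.

Lemma maximal_path_nontrivial (M : P) : maximal_path M -> M.2 != [::].
Proof.
case: M => v [|e s] [vM maxM] //.
have [e /orP [] /eqP inc_e] := exists_incident v.
- have /maxM /(_ (endpoint_subpath (or_introl erefl))) // : valid (v, [:: e]).
  by rewrite valid_cons inc_e eqxx.
- have /maxM : valid (src e, [:: e]) by rewrite valid_cons eqxx.
  by move/(_ (endpoint_subpath (p := (src e, [:: e])) (or_intror inc_e))).
Qed.

Lemma maximal_path_ends_neq (M : P) : maximal_path M -> pend M != M.1.
Proof.
move=> maxM; apply: acyclic (proj1 maxM) _.
by rewrite lt0n size_eq0 maximal_path_nontrivial.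
Qed.

Lemma maximal_path_source_endpoint (y : V) (M : P) :
  maximal_path M -> is_source y -> endpoint y M -> M.1 = y.
Proof.
move=> /maximal_path_nontrivial; case: M => v s /= + source_y [] //=.
case/lastP: s => [|s e] //; rewrite pend_rcons => _ tgt_e.
by have := source_y e; rewrite tgt_e eqxx.
Qed.

Lemma sink_path_unique (c : E) s1 s2 :
  valid (tgt c, s1) -> valid (tgt c, s2) ->
  is_sink (pend (tgt c, s1)) -> is_sink (pend (tgt c, s2)) -> s1 = s2.
Proof.
elim: s1 s2 c => [|e1 s1 IH] [|e2 s2] c //; rewrite ?valid_cons ?pend_nil.
- by move=> _ /andP [/eqP src_e2 _] /(_ e2); rewrite src_e2 eqxx.
- by move=> /andP [/eqP src_e1 _] _ _ /(_ e1); rewrite src_e1 eqxx.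
rewrite !pend_cons => /andP [/eqP c_e1 v1] /andP [/eqP c_e2 v2] sink1 sink2.
have e12 : e1 = e2 by apply: (@out_arrow_unique c); congruence.
by subst e2; rewrite (IH s2 e1).
Qed.

Lemma source_path_unique (c : E) (v1 v2 : V) s1 s2 :
  valid (v1, s1) -> valid (v2, s2) -> pend (v1, s1) = src c -> pend (v2, s2) = src c ->
  is_source v1 -> is_source v2 -> (v1, s1) = (v2, s2).
Proof.
elim/last_ind: s1 s2 c => [|s1 e1 IH] s2 c; case/lastP: s2 => [|s2 e2];
  rewrite ?pend_nil ?pend_rcons.
- by move=> _ _ -> ->.
- by move=> _ _ -> tgt_e2 /(_ e2); rewrite tgt_e2 eqxx.
- by move=> _ _ tgt_e1 -> _ /(_ e1); rewrite tgt_e1 eqxx.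
rewrite !valid_rcons => /andP [val1 /eqP e1_end] /andP [val2 /eqP e2_end] c_e1 c_e2 so1 so2.
have e12 : e1 = e2 by apply: (@in_arrow_unique c); congruence.
subst e2; by case: (IH s2 e1 val1 val2 (esym e1_end) (esym e2_end) so1 so2) => -> ->.
Qed.

Lemma maximal_path_arrow_inj (e : E) (M1 M2 : P) : maximal_path M1 -> maximal_path M2 ->
  e \in M1.2 -> e \in M2.2 -> M1 = M2.
Proof.
move=> max1 max2; move: (maximal_path_sink max1) (maximal_path_sink max2).
move: (maximal_path_source max1) (maximal_path_source max2) (proj1 max1) (proj1 max2).
case: M1 {max1} => v1 s1; case: M2 {max2} => v2 s2 /= so1 so2 + + + + in1 in2.
case/splitPr: in1 => a1 b1; case/splitPr: in2 => a2 b2.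
rewrite !pend_cat !pend_cons !valid_cat !valid_cons.
move=> /and3P [va1 /eqP e_end1 vb1] /and3P [va2 /eqP e_end2 vb2] si1 si2.
case: (source_path_unique va1 va2 (esym e_end1) (esym e_end2) so1 so2) => -> ->.
by rewrite (sink_path_unique vb1 vb2 si1 si2).
Qed.

Lemma trivial_subpath_incident (x : V) (M : P) : valid M -> M.2 != [::] ->
  subpath (x, [::]) M -> exists2 e, e \in M.2 & incident x e.
Proof.
case: M => v s vM + /subpathP [a [b []]] /= s_eq x_eq; rewrite {}s_eq {}x_eq in vM *.
case/lastP: a vM => [|a e] /=.
  case: b => [|e b] // + _; rewrite valid_cons => /andP [/eqP src_e _].
  by exists e; rewrite ?inE ?eqxx // /incident src_e eqxx.
by exists e; rewrite ?mem_cat ?mem_rcons ?inE ?eqxx // /incident pend_rcons eqxx orbT.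
Qed.

Lemma endpoint_incident (x : V) (M : P) : maximal_path M -> endpoint x M ->
  exists2 e, e \in M.2 & incident x e.
Proof.
move=> maxM /endpoint_subpath.
exact: trivial_subpath_incident (proj1 maxM) (maximal_path_nontrivial maxM).
Qed.

(* An interior vertex of M1 carries two arrows of M1, so an arrow of M2 at it is one of them. *)
Lemma common_vertex_endpoint (x : V) (M1 M2 : P) :
  maximal_path M1 -> maximal_path M2 -> M1 <> M2 ->
  subpath (x, [::]) M1 -> subpath (x, [::]) M2 -> endpoint x M1.
Proof.
move=> max1 max2 M12 sub1 /(trivial_subpath_incident (proj1 max2)).
case/(_ (maximal_path_nontrivial max2)) => e2 in2 inc2.
have shared e : e \in M1.2 -> e = e2 -> False.
  by move=> in1 e12; apply: M12; apply: (maximal_path_arrow_inj max1 max2 in1); rewrite e12.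
move: sub1 (proj1 max1) shared inc2.
case: M1 {max1 M12} => v s /subpathP [a [b []]] /= -> ->.
case/lastP: a => [|a ea]; first by left.
case: b => [|eb b]; first by right; rewrite cats0.
rewrite !pend_rcons valid_cat valid_cons pend_rcons => /and3P [_ /eqP src_eb _] shared inc2.
have := @incident_at_most_two (tgt ea) ea eb e2.
rewrite inc2 /incident src_eb !eqxx ?orbT => /(_ isT isT isT) [eab|ea2|eb2].
- by have := src_neq_tgt eb; rewrite src_eb -eab eqxx.
- by exfalso; apply: (shared ea _ ea2); rewrite mem_cat mem_rcons mem_head.
- by exfalso; apply: (shared eb _ eb2); rewrite mem_cat mem_head orbT.
Qed.

Lemma common_subpath_trivial (p M1 M2 : P) :
  maximal_path M1 -> maximal_path M2 -> M1 <> M2 -> subpath p M1 -> subpath p M2 ->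
  exists x, [/\ p = (x, [::]), endpoint x M1 & endpoint x M2].
Proof.
move=> max1 max2 M12; case: p => x [|e s] sub1 sub2.
  exists x; split=> //; first exact: common_vertex_endpoint max1 max2 M12 sub1 sub2.
  by apply: common_vertex_endpoint max2 max1 _ sub2 sub1 => /esym.
have /subpath_mem in1 := sub1; have /subpath_mem in2 := sub2.
case: M12; exact: maximal_path_arrow_inj max1 max2 (in1 _ (mem_head e s)) (in2 _ (mem_head e s)).
Qed.

Lemma endpoint_at_most_two (x : V) (M1 M2 M3 : P) :
  maximal_path M1 -> maximal_path M2 -> maximal_path M3 ->
  endpoint x M1 -> endpoint x M2 -> endpoint x M3 -> [\/ M1 = M2, M1 = M3 | M2 = M3].
Proof.
move=> max1 max2 max3 /(endpoint_incident max1) [e1 in1 inc1].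
move=> /(endpoint_incident max2) [e2 in2 inc2] /(endpoint_incident max3) [e3 in3 inc3].
case: (incident_at_most_two inc1 inc2 inc3) => [e12|e13|e23].
- by apply: Or31; apply: maximal_path_arrow_inj max1 max2 in1 _; rewrite e12.
- by apply: Or32; apply: maximal_path_arrow_inj max1 max3 in1 _; rewrite e13.
- by apply: Or33; apply: maximal_path_arrow_inj max2 max3 in2 _; rewrite e23.
Qed.

Section Decomposition.
Variable K : fieldType.
Local Notation F := (P -> K).
Variables (I J : F -> Prop) (X Y : P -> bool).
Hypotheses (closedX : superpath_closed X) (closedY : superpath_closed Y).
Hypotheses (IX : forall f, I f <-> path_span X f) (JY : forall f, J f <-> path_span Y f).
Variables (w : seq P) (xs : seq V) (d0 : P) (dx : V).
Hypotheses (size_w : 2 <= size w) (size_xs : size xs = (size w).-1) (uniq_w : uniq w).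
Hypothesis verticesI : forall p, GI_vertex I p <-> p \in w.
Hypothesis edgesI : forall x, GI_edge I x <-> x \in xs.
Hypothesis chain : forall i, i < size xs -> joins (nth dx xs i) (nth d0 w i) (nth d0 w i.+1).
Hypothesis edges_cover : forall x, source_or_sink x -> GI_edge I x \/ GI_edge J x.
Hypothesis isolated_source : forall M, GI_vertex I M -> GI_vertex J M ->
  (forall x, GI_edge I x -> GI_edge J x -> ~ endpoint x M) ->
  forall x, GI_edge J x -> endpoint x M -> is_source x.
Hypothesis J_not_Gamma : ~ GI_is_Gamma J.

Let vertexI := GI_vertexE (proj1 closedX) IX.
Let vertexJ := GI_vertexE (proj1 closedY) JY.
Let edgeI := GI_edgeE (proj1 closedX) IX.
Let edgeJ := GI_edgeE (proj1 closedY) JY.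

Lemma chain_vertex i : i < size w -> maximal_path (nth d0 w i) /\ X (nth d0 w i).
Proof. by move=> lt_i; apply/vertexI/verticesI; rewrite mem_nth. Qed.

Lemma chain_index (M : P) : maximal_path M -> X M -> exists2 i, i < size w & M = nth d0 w i.
Proof.
move=> maxM XM; have /verticesI M_in : GI_vertex I M by apply/vertexI.
by exists (index M w); rewrite ?index_mem ?nth_index.
Qed.

Lemma chain_nth_inj i k : i < size w -> k < size w -> nth d0 w i = nth d0 w k -> i = k.
Proof. by move=> lt_i lt_k /eqP; rewrite nth_uniq // => /eqP. Qed.

Lemma chain_edge_index (x : V) : GI_edge I x -> exists2 m, m < size xs & x = nth dx xs m.
Proof. by move/edgesI => x_in; exists (index x xs); rewrite ?index_mem ?nth_index. Qed.

Lemma chain_edge_endpoint m i : m < size xs -> i < size w ->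
  endpoint (nth dx xs m) (nth d0 w i) -> i = m \/ i = m.+1.
Proof.
move=> lt_m lt_i end_i; have [neq end_m end_m1] := chain lt_m.
have lt_m0 : m < size w by lia.
have lt_m1 : m.+1 < size w by lia.
have [max_i _] := chain_vertex lt_i; have [max_m _] := chain_vertex lt_m0.
have [max_m1 _] := chain_vertex lt_m1.
case: (endpoint_at_most_two max_i max_m max_m1 end_i end_m end_m1).
- by move/(chain_nth_inj lt_i lt_m0); left.
- by move/(chain_nth_inj lt_i lt_m1); right.
- by [].
Qed.

Lemma chain_edge_not_in_J : exists2 j, j < size xs & ~ GI_edge J (nth dx xs j).
Proof.
apply: NNPP => no_gap; apply: J_not_Gamma.
have all_J x : source_or_sink x -> GI_edge J x.
  move=> /edges_cover [/chain_edge_index [m lt_m ->]|//].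
  by apply: NNPP => not_J; apply: no_gap; exists m.
split=> [p|x]; split=> [[]//|]; last exact: all_J.
move=> max_p; apply/vertexJ; split=> //.
have /all_J /edgeJ [_ Y_start] := maximal_path_endpoint max_p (or_introl erefl).
exact: (proj2 closedY) Y_start (proj1 max_p) (endpoint_subpath (or_introl erefl)).
Qed.

Lemma prod_path_in_chain (p : P) :
  prod_paths X Y p -> exists2 i, i < size w & subpath p (nth d0 w i).
Proof.
case=> vp [k _ /andP [_ Xk]]; have [M maxM pM] := maximal_superpath vp.
have XM : X M := proj2 closedX _ _ Xk (proj1 maxM) (subpath_trans (path_drop_subpath _ _) pM).
by have [i lt_i M_i] := chain_index maxM XM; exists i; rewrite -?M_i.
Qed.

Section Gap.
Variable j : nat.
Hypotheses (lt_j : j < size xs) (gap : ~ GI_edge J (nth dx xs j)).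

Definition before_gap (p : P) : Prop := exists2 i, i <= j & subpath p (nth d0 w i).
Definition after_gap (p : P) : Prop :=
  exists i, [/\ j < i, i < size w & subpath p (nth d0 w i)].

Lemma before_or_after (p : P) : prod_paths X Y p -> before_gap p \/ after_gap p.
Proof.
case/prod_path_in_chain => i lt_i sub_i.
by have [le_ij|lt_ji] := leqP i j; [left; exists i | right; exists i].
Qed.

(* A path lying on both sides of the gap is a common edge of Gamma_I and Gamma_J
   shared by two chain vertices on opposite sides of x_j, hence x_j itself. *)
Lemma before_after_disjoint (p : P) :
  prod_paths X Y p -> before_gap p -> after_gap p -> False.
Proof.
move=> Zp [i le_ij sub_i] [k [lt_jk lt_k sub_k]].
have lt_i : i < size w by lia.
have [max_i _] := chain_vertex lt_i; have [max_k _] := chain_vertex lt_k.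
have neq_ik : nth d0 w i <> nth d0 w k by move/(chain_nth_inj lt_i lt_k); lia.
have [x [p_x end_i end_k]] := common_subpath_trivial max_i max_k neq_ik sub_i sub_k.
subst p; case: Zp => _ [i0 _ /andP [Yx Xx]].
have ss_x := maximal_path_endpoint max_i end_i.
have I_x : GI_edge I x by apply/edgeI.
have J_x : GI_edge J x by apply/edgeJ.
have [m lt_m x_m] := chain_edge_index I_x.
subst x; have := chain_edge_endpoint lt_m lt_i end_i.
have := chain_edge_endpoint lt_m lt_k end_k => k_m i_m.
have m_j : m = j by case: k_m; case: i_m; lia.
by apply: gap; rewrite -m_j.
Qed.

Lemma before_gap_closed : superpath_closed (fun p => prod_paths X Y p /\ before_gap p).
Proof.
split=> [p [[]] //|p q [Zp before_p] vq pq].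
have Zq := proj2 (prod_paths_closed closedX closedY) _ _ Zp vq pq.
split=> //; case: (before_or_after Zq) => // -[i [lt_ji lt_i sub_q]].
by case: (before_after_disjoint Zp before_p); exists i; split=> //; apply: subpath_trans pq sub_q.
Qed.

Lemma after_gap_closed : superpath_closed (fun p => prod_paths X Y p /\ after_gap p).
Proof.
split=> [p [[]] //|p q [Zp after_p] vq pq].
have Zq := proj2 (prod_paths_closed closedX closedY) _ _ Zp vq pq.
split=> //; case: (before_or_after Zq) => // -[i le_ij sub_q].
by case: (before_after_disjoint Zp _ after_p); exists i => //; apply: subpath_trans pq sub_q.
Qed.

End Gap.

(* Otherwise both endpoints of the end vertex of the chain are chain edges adjacent to it,
   hence the same edge of the chain, i.e. the same vertex of Q. *)
Lemma chain_end_J_edge i : i = 0 \/ i = (size w).-1 ->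
  exists2 y, endpoint y (nth d0 w i) & GI_edge J y.
Proof.
move=> end_i; have lt_i : i < size w by lia.
have [max_i _] := chain_vertex lt_i; apply: NNPP => no_J.
have edge_index x : endpoint x (nth d0 w i) ->
    exists2 m, m < size xs & x = nth dx xs m /\ (i = m \/ i = m.+1).
  move=> end_x; case: (edges_cover (maximal_path_endpoint max_i end_x)); last first.
    by move=> J_x; case: no_J; exists x.
  case/chain_edge_index => m lt_m x_m; exists m => //; split=> //.
  by apply: chain_edge_endpoint; rewrite -?x_m.
have [m1 lt_m1 [start_m1 i_m1]] := edge_index _ (or_introl erefl).
have [m2 lt_m2 [end_m2 i_m2]] := edge_index _ (or_intror erefl).
have m12 : m1 = m2 by case: i_m1; case: i_m2; case: end_i; lia.
by have := maximal_path_ends_neq max_i; rewrite end_m2 start_m1 m12 eqxx.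
Qed.

Lemma chain_end_prod_path i : i = 0 \/ i = (size w).-1 ->
  exists2 z, prod_paths X Y z & subpath z (nth d0 w i).
Proof.
move=> end_i; have lt_i : i < size w by lia.
have [max_i X_i] := chain_vertex lt_i; have [y end_y J_y] := chain_end_J_edge end_i.
have [[x [I_x J_x end_x]]|no_common] := classic
    (exists x, [/\ GI_edge I x, GI_edge J x & endpoint x (nth d0 w i)]).
  exists (x, [::]); last exact: endpoint_subpath.
  split=> //; exists 0 => //; apply/andP.
  by split; [case/edgeJ: J_x | case/edgeI: I_x].
have Y_i : Y (nth d0 w i).
  have [_ Y_y] := proj1 (edgeJ y) J_y.
  exact: (proj2 closedY) Y_y (proj1 max_i) (endpoint_subpath end_y).
have source_y : is_source y.
  apply: (isolated_source _ _ _ J_y end_y); [exact/vertexI | exact/vertexJ |].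
  by move=> x I_x J_x end_x; apply: no_common; exists x.
exists (nth d0 w i); last exact: subpath_refl.
split; first exact: proj1 max_i.
exists 0 => //; apply/andP; split.
- rewrite /path_take take0 (maximal_path_source_endpoint max_i source_y end_y).
  by case/edgeJ: J_y.
- by rewrite /path_drop /path_take take0 drop0 pend_nil -surjective_pairing.
Qed.

Lemma prod_ideal_decomposes : decomposes (prod_ideal I J).
Proof.
have [j lt_j gap] := chain_edge_not_in_J.
apply: decomposes_iff (prod_ideal_span closedX closedY IX JY) _.
apply: (path_span_decomposes K (before_gap_closed lt_j gap) (after_gap_closed lt_j gap)).
- by move=> p [Zp before_p] [_ after_p]; apply: (before_after_disjoint lt_j gap Zp).
- by move=> p; split=> [Zp|[[]|[]] //]; case: (before_or_after j Zp); [left|right].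
- have [z Zz sub_z] := chain_end_prod_path (or_introl erefl).
  by exists z; split=> //; exists 0.
- have [z Zz sub_z] := chain_end_prod_path (or_intror erefl); exists z; split=> //.
  by exists (size w).-1; split=> //; lia.
Qed.

End Decomposition.

End Cycle.

End Acyclic.

End Quiver.

Theorem corollary26 (K : closedFieldType) (n : nat) (Q : quiver)
  (I J : (qpath Q -> K) -> Prop) :
  admissible_At Q n ->
  lin_semigroup_ideal I -> indecomposable I -> typeII I ->
  lin_semigroup_ideal J -> indecomposable J -> typeII J ->
  (* Gamma_I \cup Gamma_J = Gamma *)
  (forall p, maximal_path p <-> GI_vertex I p \/ GI_vertex J p) ->
  (forall x, source_or_sink x <-> GI_edge I x \/ GI_edge J x) ->
  (* for every isolated vertex w of Gamma_I \cap Gamma_J, the edge of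
     Gamma_J adjacent to w is a source of Q *)
  (forall w, GI_vertex I w -> GI_vertex J w ->
     (forall x, GI_edge I x -> GI_edge J x -> ~ endpoint x w) ->
     forall x, GI_edge J x -> endpoint x w -> is_source x) ->
  decomposes (prod_ideal I J).
Proof.
move=> [cycle [acyclic [x0 _]]] [X [X_valid X_up IX]] _ [chainI _].
move=> [Y [Y_valid Y_up JY]] _ [_ J_not_Gamma] _ edges_cover isolated_source.
have [w [xs [[size_w size_xs] [uniq_w _] verticesI edgesI chain]]] := chainI.
exact: (prod_ideal_decomposes acyclic cycle (conj X_valid X_up) (conj Y_valid Y_up) IX JY
  size_w size_xs uniq_w verticesI edgesI (fun i => chain i (x0, [::]) x0)
  (fun x => proj1 (edges_cover x)) isolated_source J_not_Gamma).
Qed.
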